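(* Let $\varepsilon>0$, $\alpha=\varepsilon/(2M)$, $\eta=\alpha/(L+\alpha)$. Run AggGCG (primal) from $y_0\in\mathrm{dom}\, h$, $s_0\in\mathbb{R}^n$: for $k\ge0$, $x_{k+1}=\mathrm{argmin}_x\{\langle s_k,x\rangle+h^\alpha(x)\}$, $y_{k+1}=(1-\eta)y_k+\eta x_{k+1}$, $s_{k+1}=(1-\eta)s_k+\eta\nabla f(y_k)$. Then the method computes a pair $(y_k,s_k)$ satisfying $\phi^\alpha(y_k)+\psi^\alpha(s_k)\le\varepsilon/2$ in $k=\tilde{\mathcal{O}}(1+ML\varepsilon^{-1})$ iterations. Consequently, the complexity to obtain a point $x$ with $\phi(x)-\phi_*\le\varepsilon$ is $\tilde{\mathcal{O}}(1+ML\varepsilon^{-1})$.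
   Context: Let $\|\cdot\|$ be a norm on $\mathbb{R}^n$ with dual norm $\|\cdot\|_*$. Let $f:\mathbb{R}^n\to\mathbb{R}$ be convex, differentiable and $L$-smooth ($L>0$) with respect to $\|\cdot\|$, $h:\mathbb{R}^n\to(-\infty,\infty]$ closed proper convex with bounded domain, and $w:\mathbb{R}^n\to[0,+\infty]$ closed, $1$-strongly convex with respect to $\|\cdot\|$ on $\mathrm{dom}\, h$, with $M:=\max_{x\in\mathrm{dom}\, h}w(x)<\infty$. Let $\phi=f+h$, $\phi_*=\min\phi$, $h^\alpha=h+\alpha w$, $\phi^\alpha=f+h^\alpha$, $\psi^\alpha(z)=(h^\alpha)^*(-z)+f^*(z)$, with $^*$ the convex conjugate. The notation $\tilde{\mathcal{O}}$ hides logarithmic factors (in $\varepsilon$ and the initial gap $\phi^\alpha(y_0)+\psi^\alpha(s_0)$). *)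

From HB Require Import structures.
From mathcomp Require Import all_boot all_order all_algebra.
From mathcomp Require Import all_classical all_reals all_analysis.
Set Implicit Arguments. Unset Strict Implicit. Unset Printing Implicit Defensive.
Import Order.TTheory GRing.Theory Num.Theory.
Import numFieldNormedType.Exports.
Local Open Scope classical_set_scope.
Local Open Scope ring_scope.

Section Defs.
Variables (R : realType) (n : nat).
Notation V := 'rV[R]_n.

Definition dotp (u v : V) : R := \sum_(i < n) u ord0 i * v ord0 i.

Definition is_norm (N : V -> R) : Prop :=
  [/\ forall x, N x = 0 -> x = 0,
      forall (a : R) x, N (a *: x) = `|a| * N x
    & forall x y, N (x + y) <= N x + N y].

Definition dual_norm (N : V -> R) (s : V) : R :=
  sup [set dotp s x | x in [set x | N x <= 1]].

Definition is_gradient (f : V -> R) (g : V -> V) : Prop :=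
  forall x, differentiable f x /\ forall v, 'd f x v = dotp (g x) v.

Definition convex_fun (f : V -> R) : Prop :=
  forall x y (t : R), 0 <= t <= 1 ->
    f (t *: x + (1 - t) *: y) <= t * f x + (1 - t) * f y.

Definition smooth_wrt (N : V -> R) (g : V -> V) (L : R) : Prop :=
  forall x y, dual_norm N (g x - g y) <= L * N (x - y).

Local Open Scope ereal_scope.

Definition edom (h : V -> \bar R) : set V := [set x | h x < +oo].

Definition eclosed (h : V -> \bar R) : Prop :=
  closed [set p : V * R | h p.1 <= p.2%:E].

Definition econvex (h : V -> \bar R) : Prop :=
  forall x y : V, forall t : R, (0 <= t <= 1)%R ->
    h (t *: x + (1 - t) *: y)%R <= t%:E * h x + (1 - t)%R%:E * h y.

Definition eproper (h : V -> \bar R) : Prop :=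
  (forall x, -oo < h x) /\ exists x, h x < +oo.

Definition bounded_dom (N : V -> R) (h : V -> \bar R) : Prop :=
  exists B : R, forall x, edom h x -> (N x <= B)%R.

Definition strongly_convex_on (N : V -> R) (D : set V) (w : V -> \bar R) : Prop :=
  forall x y : V, forall t : R, D x -> D y -> (0 <= t <= 1)%R ->
    w (t *: x + (1 - t) *: y)%R + ((t * (1 - t) / 2 * N (x - y) ^+ 2)%R)%:E
      <= t%:E * w x + (1 - t)%R%:E * w y.

Definition econj (h : V -> \bar R) (z : V) : \bar R :=
  ereal_sup [set (dotp z x)%:E - h x | x in [set: V]].

Definition rconj (f : V -> R) (z : V) : \bar R :=
  ereal_sup [set (dotp z x - f x)%R%:E | x in [set: V]].

Definition halpha (h w : V -> \bar R) (alpha : R) (x : V) : \bar R :=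
  h x + alpha%:E * w x.

Definition phi (f : V -> R) (h : V -> \bar R) (x : V) : \bar R := (f x)%:E + h x.

Definition phi_star (f : V -> R) (h : V -> \bar R) : \bar R :=
  ereal_inf [set phi f h x | x in [set: V]].

Definition phialpha (f : V -> R) (h w : V -> \bar R) (alpha : R) (x : V) : \bar R :=
  (f x)%:E + halpha h w alpha x.

Definition psialpha (f : V -> R) (h w : V -> \bar R) (alpha : R) (z : V) : \bar R :=
  econj (halpha h w alpha) (- z)%R + rconj f z.

Definition gap (f : V -> R) (h w : V -> \bar R) (alpha : R) (y s : V) : \bar R :=
  phialpha f h w alpha y + psialpha f h w alpha s.

Definition is_argmin_lin (h w : V -> \bar R) (alpha : R) (s x : V) : Prop :=
  forall z, (dotp s x)%:E + halpha h w alpha x <= (dotp s z)%:E + halpha h w alpha z.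

Definition AggGCG (g : V -> V) (h w : V -> \bar R) (alpha eta : R)
    (x y s : nat -> V) : Prop :=
  forall k,
    [/\ is_argmin_lin h w alpha (s k) (x k.+1),
        y k.+1 = ((1 - eta) *: y k + eta *: x k.+1)%R
      & s k.+1 = ((1 - eta) *: s k + eta *: g (y k))%R].

End Defs.

(* The gap G(y, s) = phi^alpha(y) + psi^alpha(s) contracts by the factor 1 - eta at
   every AggGCG step.  Three estimates give this: the descent lemma bounds f at
   y_{k+1} = y_k + eta (x_{k+1} - y_k); the alpha-strong convexity of <s_k, .> + h^alpha
   around its minimiser x_{k+1} bounds (h^alpha)^*(-s_{k+1}); and the (1/L)-strong
   convexity of f^*, in the form f^*(s) >= <s, z> - f z + ||s - grad f z||_*^2 / (2L),
   puts f^*(s_{k+1}) below the convex combination of f^*(s_k) and f^*(grad f y_k) by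
   eta (1 - eta) ||s_k - grad f y_k||_*^2 / (2L).  With L eta = alpha (1 - eta) the
   quadratic terms cancel, so G_k <= (1 - eta)^k G_0 <= eps/2 as soon as
   k >= (1 + L/alpha)(1 + ln (1 + G_0/eps)), and L/alpha = 2 M L / eps.  Weak duality
   and 0 <= alpha w <= alpha M = eps/2 on dom h then give phi(y_k) <= phi_* + eps. *)

From HB Require Import structures.
From mathcomp Require Import all_boot all_order all_algebra.
From mathcomp Require Import all_classical all_reals all_analysis.
From mathcomp Require Import lra ring.
Import Order.TTheory GRing.Theory Num.Theory.
Import numFieldNormedType.Exports.
Local Open Scope classical_set_scope.
Local Open Scope ring_scope.
Set Implicit Arguments. Unset Strict Implicit. Unset Printing Implicit Defensive.

Section InnerProduct.
Variables (R : realType) (n : nat).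
Implicit Types (a : R) (u v z : 'rV[R]_n).

Lemma dotpDr u v z : dotp u (v + z) = dotp u v + dotp u z.
Proof. by rewrite /dotp -big_split; apply: eq_bigr => i _; rewrite mxE mulrDr. Qed.

Lemma dotpDl u v z : dotp (u + v) z = dotp u z + dotp v z.
Proof. by rewrite /dotp -big_split; apply: eq_bigr => i _; rewrite mxE mulrDl. Qed.

Lemma dotpZr a u v : dotp u (a *: v) = a * dotp u v.
Proof. by rewrite /dotp mulr_sumr; apply: eq_bigr => i _; rewrite mxE mulrCA. Qed.

Lemma dotpZl a u v : dotp (a *: u) v = a * dotp u v.
Proof. by rewrite /dotp mulr_sumr; apply: eq_bigr => i _; rewrite mxE mulrA. Qed.

Lemma dotpNr u v : dotp u (- v) = - dotp u v.
Proof. by rewrite -scaleN1r dotpZr mulN1r. Qed.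

Lemma dotpNl u v : dotp (- u) v = - dotp u v.
Proof. by rewrite -scaleN1r dotpZl mulN1r. Qed.

Lemma dotpBr u v z : dotp u (v - z) = dotp u v - dotp u z.
Proof. by rewrite dotpDr dotpNr. Qed.

Lemma dotpBl u v z : dotp (u - v) z = dotp u z - dotp v z.
Proof. by rewrite dotpDl dotpNl. Qed.

Lemma dotp0r u : dotp u 0 = 0.
Proof. by rewrite -(scale0r 0) dotpZr mul0r. Qed.

Lemma ler_coord_mx_norm u i : `|u ord0 i| <= `|u|.
Proof.
change (`|u ord0 i| <= mx_norm u); rewrite mx_normrE.
exact: (le_bigmax 0 (fun ij : 'I_1 * 'I_n => `|u ij.1 ij.2|) (ord0, i)).
Qed.

Lemma ler_abs_dotp u v : `|dotp u v| <= (\sum_(i < n) `|u ord0 i|) * `|v|.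
Proof.
rewrite /dotp mulr_suml; apply: le_trans (ler_norm_sum _ _ _) _.
by apply: ler_sum => i _; rewrite normrM ler_wpM2l // ler_coord_mx_norm.
Qed.

End InnerProduct.

Section Norm.
Variables (R : realType) (n : nat).
Notation V := 'rV[R]_n.
Variable N : V -> R.
Hypothesis normN : is_norm N.
Implicit Types (a : R) (u v : V).

Lemma nrm0_eq0 u : N u = 0 -> u = 0.
Proof. by case: normN => + _ _; apply. Qed.

Lemma nrmZ a u : N (a *: u) = `|a| * N u.
Proof. by case: normN. Qed.

Lemma ler_nrmD u v : N (u + v) <= N u + N v.
Proof. by case: normN. Qed.

Lemma nrm0 : N 0 = 0.
Proof. by rewrite -(scale0r 0) nrmZ normr0 mul0r. Qed.

Lemma nrmN u : N (- u) = N u.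
Proof. by rewrite -scaleN1r nrmZ normrN normr1 mul1r. Qed.

Lemma nrm_ge0 u : 0 <= N u.
Proof.
have := ler_nrmD u (- u); rewrite subrr nrm0 nrmN -mulr2n.
by rewrite pmulrn_lge0.
Qed.

Lemma nrm_gt0 u : u != 0 -> 0 < N u.
Proof. by move=> u0; rewrite lt_def nrm_ge0 andbT; apply: contra_neq u0; apply: nrm0_eq0. Qed.

Lemma nrm_distC u v : N (u - v) = N (v - u).
Proof. by rewrite -nrmN opprB. Qed.

Lemma ler_nrm_sum (I : finType) (F : I -> V) : N (\sum_i F i) <= \sum_i N (F i).
Proof.
elim/big_ind2: _ => [|u1 u2 r1 r2 h1 h2|//]; first by rewrite nrm0.
exact: le_trans (ler_nrmD _ _) (lerD h1 h2).
Qed.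

Lemma ler_nrm_mx_norm : exists2 K, 0 <= K & forall u, N u <= K * `|u|.
Proof.
exists (\sum_(j < n) N 'e_j); first by apply: sumr_ge0 => j _; apply: nrm_ge0.
move=> u; rewrite {1}(row_sum_delta u) mulr_suml.
apply: le_trans (ler_nrm_sum _) (ler_sum _ _) => j _.
by rewrite nrmZ mulrC ler_wpM2l ?nrm_ge0 ?ler_coord_mx_norm.
Qed.

Lemma nrm_continuous : continuous N.
Proof.
have [K K0 NK] := ler_nrm_mx_norm.
move=> x; apply/(@cvgrPdist_le _ _ _ (nbhs x) (nbhs_filter x)) => e e0.
have K1 : 0 < K + 1 by lra.
near=> y.
have xy : `|x - y| <= e / (K + 1).
  by near: y; apply: (@cvgr_dist_le _ _ _ (nbhs x) _ id x cvg_id); rewrite divr_gt0.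
have Nxy : N (x - y) <= e.
  apply: le_trans (NK _) _; apply: le_trans (ler_wpM2l K0 xy) _.
  rewrite mulrA ler_pdivrMr //; nra.
have := ler_nrmD (x - y) y; have := ler_nrmD (y - x) x.
rewrite !subrK nrm_distC ler_norml => ? ?; apply/andP; split; lra.
Unshelve. all: by end_near.
Qed.

Let normalize u : u != 0 -> `| `|u|^-1 *: u | = 1.
Proof.
by move=> u0; rewrite normrZ normrV ?unitfE ?normr_eq0 // normr_id mulVf ?normr_eq0.
Qed.

Lemma mx_norm_le_nrm : exists2 c, 0 < c & forall u, `|u| <= c * N u.
Proof.
pose S := [set u : V | `|u| = 1].
have [[u1 Su1]|S0] := pselect (S !=set0); last first.
  exists 1 => // u; have [->|u0] := eqVneq u 0; first by rewrite normr0 mul1r nrm_ge0.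
  by exfalso; apply: S0; exists (`|u|^-1 *: u); apply: normalize.
have Sc : compact S.
  apply: bounded_closed_compact.
    by exists 1; split => // r r1 v /= ->; apply: ltW.
  apply: (preimage_closed (f := fun u : V => `|u|) (D := [set r : R | r = 1])).
    by move=> v _; apply: norm_continuous.
  exact: closed_eq.
have [c Sc_ cmin] := EVT_min_rV (ex_intro _ u1 Su1) Sc (continuous_subspaceT nrm_continuous).
have c1 : `|c| = 1 by move: Sc_; rewrite inE.
have Nc : 0 < N c.
  by apply: nrm_gt0; apply: contra_eq_neq c1 => ->; rewrite normr0 eq_sym oner_neq0.
exists (N c)^-1; first by rewrite invr_gt0.
move=> u; have [->|u0] := eqVneq u 0; first by rewrite normr0 nrm0 mulr0.
have nu : 0 < `|u| by rewrite normr_gt0.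
have := cmin (`|u|^-1 *: u); rewrite inE /S /= normalize // => /(_ erefl).
rewrite nrmZ normrV ?unitfE ?gt_eqF // normr_id ler_pdivlMl // => h.
by rewrite ler_pdivlMl // mulrC.
Qed.

Lemma ler_abs_dotp_nrm e : exists2 B, 0 <= B & forall u, `|dotp e u| <= B * N u.
Proof.
have [c c0 hc] := mx_norm_le_nrm.
exists ((\sum_i `|e ord0 i|) * c).
  by rewrite mulr_ge0 ?sumr_ge0 // ltW.
move=> u; apply: le_trans (ler_abs_dotp _ _) _.
by rewrite -mulrA ler_wpM2l ?sumr_ge0.
Qed.

End Norm.

Section DualNorm.
Variables (R : realType) (n : nat).
Notation V := 'rV[R]_n.
Variable N : V -> R.
Hypothesis normN : is_norm N.
Implicit Types (e u : V).

(* [dual_norm] is a [sup], meaningful only on bounded sets: this is where the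
   equivalence of N with the sup norm is needed. *)
Let dual_set e := [set dotp e u | u in [set u | N u <= 1]].

Let dual_set0 e : dual_set e 0.
Proof. by exists 0; rewrite ?dotp0r //= (nrm0 normN). Qed.

Let has_sup_dual_set e : has_sup (dual_set e).
Proof.
split; first by exists 0.
have [B B0 hB] := ler_abs_dotp_nrm normN e.
exists B => _ [u /= Nu <-]; apply: le_trans (ler_norm _) _.
by apply: le_trans (hB u) _; rewrite ler_piMr.
Qed.

Lemma dual_norm_ge0 e : 0 <= dual_norm N e.
Proof. exact: (sup_upper_bound (has_sup_dual_set e) (dual_set0 e)). Qed.

Lemma ler_dotp_dual e u : dotp e u <= dual_norm N e * N u.
Proof.
have [->|u0] := eqVneq u 0; first by rewrite dotp0r (nrm0 normN) mulr0.
have Nu := nrm_gt0 normN u0.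
have : dual_set e (dotp e ((N u)^-1 *: u)).
  exists ((N u)^-1 *: u) => //=.
  by rewrite (nrmZ normN) gtr0_norm ?invr_gt0 // mulVf ?gt_eqF.
move=> /(sup_upper_bound (has_sup_dual_set e)).
by rewrite dotpZr ler_pdivrMl // mulrC.
Qed.

Lemma dual_norm_le e B : (forall u, N u <= 1 -> dotp e u <= B) -> dual_norm N e <= B.
Proof.
move=> hB; apply: ge_sup; first by exists 0; apply: dual_set0.
by move=> _ [u /= /hB + <-].
Qed.

Let ler_dotp_dual1 e u : N u <= 1 -> dotp e u <= dual_norm N e.
Proof.
move=> Nu; apply: le_trans (ler_dotp_dual e u) _.
by rewrite ler_piMr ?dual_norm_ge0.
Qed.

Lemma ler_dual_normD e1 e2 : dual_norm N (e1 + e2) <= dual_norm N e1 + dual_norm N e2.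
Proof. by apply: dual_norm_le => u Nu; rewrite dotpDl lerD ?ler_dotp_dual1. Qed.

Lemma dual_normN e : dual_norm N (- e) = dual_norm N e.
Proof.
have le e' : dual_norm N (- e') <= dual_norm N e'.
  by apply: dual_norm_le => u Nu; rewrite dotpNl -dotpNr ler_dotp_dual1 ?(nrmN normN).
by apply/eqP; rewrite eq_le le /= -{1}(opprK e) le.
Qed.

End DualNorm.

Lemma ler_add_vanishing (R : realFieldType) (a b c : R) :
  (forall t, 0 < t -> t < 1 -> a <= b + t * c) -> 0 <= c -> a <= b.
Proof.
move=> hab c0; apply/ler_addgt0Pr => e e0.
pose t := Num.min (1 / 2) (e / (c + 1)).
have ec : 0 < e / (c + 1) by rewrite divr_gt0 //; lra.
have t0 : 0 < t by rewrite lt_min ec andbT divr_gt0.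
have t1 : t < 1 by rewrite gt_min; apply/orP; left; lra.
have tc : t * c <= e.
  have : t <= e / (c + 1) by rewrite ge_min lexx orbT.
  rewrite ler_pdivlMr; [nra | lra].
by apply: le_trans (hab t t0 t1) _; lra.
Qed.

Lemma is_derive_sub_quadratic (R : realType) (p : R -> R) (dp c k t : R) :
  is_derive t 1 p dp ->
  is_derive t 1 (fun r => p r - c * r - k * r ^+ 2) (dp - c - k * (2 * t)).
Proof.
move=> dpt.
have := is_deriveB (is_deriveB dpt (is_deriveZ c (is_derive_id t 1)))
   (is_deriveZ k (is_deriveX 2 (is_derive_id t 1))).
move=> /is_derive_eq; apply.
by rewrite -![_ *: 1]/(_ * 1) !mulr1 expr1.
Qed.

Section Smooth.
Variables (R : realType) (n : nat).
Notation V := 'rV[R]_n.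
Variables (N : V -> R) (f : V -> R) (g : V -> V) (L : R).
Hypothesis normN : is_norm N.
Hypothesis gradf : is_gradient f g.
Hypothesis convf : convex_fun f.
Hypothesis smoothf : smooth_wrt N g L.

Lemma is_derive_line (y d : V) (t : R) :
  is_derive t 1 (fun r : R => f (r *: d + y)) (dotp (g (t *: d + y)) d).
Proof.
have [dfx dfE] := gradf (t *: d + y).
have line : (fun r : R => r^-1 *: (((fun r => f (r *: d + y)) \o shift t) (r *: 1)
      - f (t *: d + y))) =
    (fun r : R => r^-1 *: ((f \o shift (t *: d + y)) (r *: d) - f (t *: d + y))).
  by apply/funext => r /=; rewrite -[r *: 1]/(r * 1) mulr1 scalerDl addrA.
apply: DeriveDef; first by rewrite /derivable line; apply: diff_derivable.
by rewrite /derive line -dfE; have := deriveE d dfx; rewrite /derive.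
Qed.

Lemma convex_gradient_ineq y z : f y + dotp (g y) (z - y) <= f z.
Proof.
set d := z - y; have dphi := is_derive_line y d 0.
set p := (fun r : R => f (r *: d + y)) in dphi.
set G := (fun r : R => r^-1 *: ((p \o shift 0) (r *: 1) - p 0)).
have cvG : G @ 0^'+ --> 'D_1 p 0.
  have cv : G @ 0^' --> 'D_1 p 0 by have := @ex_derive _ _ _ _ _ _ _ dphi; move/cvgP.
  move=> A /cv /nbhs_ballP [_ /posnumP[e] xe_A].
  by exists e%:num => //= r xe_r /gt_eqF/negbT/xe_A; apply.
have dpE : 'D_1 p 0 = dotp (g y) d by rewrite (@derive_val _ _ _ _ _ _ _ dphi) scale0r add0r.
suff : 'D_1 p 0 <= f z - f y by rewrite dpE; lra.
apply: (cvgr_to_le cvG); near=> r.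
have r0 : 0 < r by near: r; apply: nbhs_right_gt.
have r1 : r < 1 by near: r; apply: nbhs_right_lt.
rewrite /G /p /= -[r *: 1]/(r * 1) mulr1 addr0 scale0r add0r.
have := convf z y (t := r); rewrite (ltW r0) (ltW r1) => /(_ erefl).
have -> : r *: z + (1 - r) *: y = r *: d + y.
  by rewrite /d scalerBr scalerBl scale1r [y - _]addrC addrA.
move=> conv_r; rewrite -[_ *: _]/(_ * _) ler_pdivrMl //; lra.
Unshelve. all: by end_near.
Qed.

(* Mean value theorem for r |-> f (y + r d) - r <g y, d> - r^2 (L/2) N(d)^2 on [0, 1]. *)
Lemma descent_lemma y z :
  f z <= f y + dotp (g y) (z - y) + L / 2 * N (z - y) ^+ 2.
Proof.
set d := z - y; set c := dotp (g y) d; set k := L / 2 * N d ^+ 2.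
pose q r := f (r *: d + y) - c * r - k * r ^+ 2.
have dq t : is_derive t (1 : R) q (dotp (g (t *: d + y)) d - c - k * (2 * t)).
  exact: is_derive_sub_quadratic (is_derive_line y d t).
have qcont : {within `[0, 1], continuous q}.
  apply: continuous_subspaceT => t; have [dqt _] := dq t.
  exact/differentiable_continuous/derivable1_diffP.
have [t t01 qE] := MVT_segment ler01 (fun t _ => dq t) qcont.
have t0 : 0 <= t by move: t01; rewrite in_itv /= => /andP[].
have lip : dotp (g (t *: d + y)) d - c <= L * t * N d * N d.
  rewrite /c -dotpBl; apply: le_trans (ler_dotp_dual normN _ _) _.
  rewrite ler_wpM2r ?(nrm_ge0 normN) //; apply: le_trans (smoothf _ _) _.
  by rewrite addrK (nrmZ normN) ger0_norm // mulrA.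
move: qE; rewrite /q scale1r /d subrK scale0r add0r subr0 mulr1 mulr0.
rewrite expr1n expr0n /= mulr1 mulr0 !subr0 -/d => qE.
suff : f z - c - k - f y <= 0 by lra.
by rewrite qE /k; nra.
Qed.

Lemma rconj_ge s u : ((dotp s u - f u)%:E <= rconj f s)%E.
Proof. by apply: ereal_sup_ubound; exists u. Qed.

Lemma rconj_gradient_le y : (rconj f (g y) <= (dotp (g y) y - f y)%:E)%E.
Proof.
apply: ge_ereal_sup => _ [u _ <-]; rewrite lee_fin.
by have := convex_gradient_ineq y u; rewrite dotpBr; lra.
Qed.

Hypothesis L0 : 0 < L.

(* Test the supremum defining f^*(s) at z + (<s - g z, d> / L) d, N d <= 1, and
   bound f there by the descent lemma. *)
Lemma rconj_ge_dual_sq s z B : (rconj f s <= B%:E)%E ->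
  dotp s z - f z + dual_norm N (s - g z) ^+ 2 / (2 * L) <= B.
Proof.
move=> sB.
have sBu u : dotp s u - f u <= B by rewrite -lee_fin (le_trans (rconj_ge s u)).
set X := dotp s z - f z; set E := dual_norm N (s - g z).
have XB : 0 <= B - X by have := sBu z; rewrite /X; lra.
have test d : N d <= 1 -> dotp (s - g z) d ^+ 2 <= 2 * L * (B - X).
  move=> Nd; set a := dotp (s - g z) d; set b := a / L.
  have desc := descent_lemma z (b *: d + z); have := sBu (b *: d + z).
  rewrite addrK !dotpDr !dotpZr (nrmZ normN) in desc * => sB'.
  have Nb : L / 2 * (`|b| * N d) ^+ 2 <= L / 2 * b ^+ 2.
    apply: ler_wpM2l; first by rewrite divr_ge0 // ltW.
    rewrite exprMn real_normK ?num_real //.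
    by apply: ler_piMr; rewrite ?sqr_ge0 // expr_le1 ?(nrm_ge0 normN).
  have ab : b * dotp s d - b * dotp (g z) d = b * a by rewrite /a dotpBl mulrBr.
  have aL : b * a - L / 2 * b ^+ 2 = a ^+ 2 / (2 * L) by rewrite /b; field; rewrite gt_eqF.
  suff : a ^+ 2 / (2 * L) <= B - X by rewrite ler_pdivrMr ?mulr_gt0 // mulrC.
  by rewrite /X; lra.
have E0 : 0 <= E by apply: dual_norm_ge0.
have EB : E <= Num.sqrt (2 * L * (B - X)).
  apply: (dual_norm_le normN) => d /test Nd; apply: le_trans (ler_norm _) _.
  by rewrite -sqrtr_sqr ler_sqrt // !mulr_ge0 // ltW.
have : E ^+ 2 <= 2 * L * (B - X).
  rewrite -[Y in _ <= Y]sqr_sqrtr ?mulr_ge0 ?(ltW L0) //.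
  by rewrite ler_sqr ?nnegrE ?sqrtr_ge0.
move=> E2; suff : E ^+ 2 / (2 * L) <= B - X by lra.
by rewrite ler_pdivrMr ?mulr_gt0 // [_ * (2 * L)]mulrC.
Qed.

Lemma rconj_step s y B eta : 0 <= eta <= 1 -> (rconj f s <= B%:E)%E ->
  (rconj f ((1 - eta) *: s + eta *: g y) <=
   ((1 - eta) * B + eta * (dotp (g y) y - f y)
     - eta * (1 - eta) * (dual_norm N (s - g y) ^+ 2 / (2 * L)))%:E)%E.
Proof.
move=> /andP[eta0 eta1] sB; apply: ge_ereal_sup => _ [z _ <-]; rewrite lee_fin.
rewrite dotpDl !dotpZl.
have c1 := rconj_ge_dual_sq z sB.
have c2 := rconj_ge_dual_sq z (rconj_gradient_le y).
set a := dual_norm N (s - g z) in c1; set b := dual_norm N (g y - g z) in c2.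
set E := dual_norm N (s - g y).
have tri : E <= a + b.
  have -> : E = dual_norm N ((s - g z) + - (g y - g z)) by rewrite opprB addrA subrK.
  by apply: le_trans (ler_dual_normD normN _ _) _; rewrite (dual_normN normN).
have q : eta * (1 - eta) * E ^+ 2 <= (1 - eta) * a ^+ 2 + eta * b ^+ 2.
  have a0 : 0 <= a by apply: dual_norm_ge0.
  have b0 : 0 <= b by apply: dual_norm_ge0.
  have : E ^+ 2 <= (a + b) ^+ 2.
    by rewrite ler_sqr ?nnegrE ?(dual_norm_ge0 normN) ?addr_ge0.
  have : 0 <= eta * (1 - eta) by rewrite mulr_ge0 ?subr_ge0.
  have : 0 <= ((1 - eta) * a - eta * b) ^+ 2 by apply: sqr_ge0.
  nra.
have := ler_wpM2r (_ : 0 <= (2 * L)^-1) q; rewrite invr_ge0 mulr_ge0 ?(ltW L0) // => q'.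
have := ler_wpM2l (_ : 0 <= 1 - eta) c1; rewrite subr_ge0 eta1 => c1'.
have c2' := ler_wpM2l eta0 c2.
lra.
Qed.

End Smooth.

Lemma leeD_fin_split (R : realType) (a b : \bar R) (r : R) :
  (-oo < a)%E -> (-oo < b)%E -> (a + b <= r%:E)%E ->
  exists A B, [/\ (a <= A%:E)%E, (b <= B%:E)%E & A + B <= r].
Proof.
case: a => [A||] //; case: b => [B||] // _ _ ABr.
by exists A, B; rewrite -lee_fin EFinD.
Qed.

Lemma divDr_itv (R : realFieldType) (a b : R) : 0 < a -> 0 < b -> 0 <= b / (a + b) <= 1.
Proof.
move=> a0 b0; have ab : 0 < a + b by rewrite addr_gt0.
by rewrite divr_ge0 ?(ltW b0) ?(ltW ab) //= ler_pdivrMr // mul1r lerDr ltW.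
Qed.

Section AggGCGAnalysis.
Variables (R : realType) (n : nat).
Notation V := 'rV[R]_n.
Variables (N : V -> R) (h w : V -> \bar R) (alpha M : R).
Hypothesis normN : is_norm N.
Hypothesis properh : eproper h.
Hypothesis convh : econvex h.
Hypothesis w_ge0 : forall x, (0 <= w x)%E.
Hypothesis strongw : strongly_convex_on N (edom h) w.
Hypothesis w_leM : forall x, edom h x -> (w x <= M%:E)%E.
Hypothesis alpha0 : 0 < alpha.

(* Junk value 0 outside edom h. *)
Definition hr x := fine (h x).
Definition wr x := fine (w x).
Notation H := (halpha h w alpha).

Lemma hrE x : edom h x -> h x = (hr x)%:E.
Proof. by case: properh => /(_ x) + _; rewrite /edom /hr /=; case: (h x). Qed.

Lemma h_notin_edom x : ~ edom h x -> h x = +oo%E.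
Proof. by case: properh => /(_ x) + _; rewrite /edom /=; case: (h x). Qed.

Lemma wrE x : edom h x -> w x = (wr x)%:E.
Proof. by move=> /w_leM; have := w_ge0 x; rewrite /wr; case: (w x). Qed.

Lemma wr_ge0 x : edom h x -> 0 <= wr x.
Proof. by move=> hx; have := w_ge0 x; rewrite (wrE hx) lee_fin. Qed.

Lemma wr_leM x : edom h x -> wr x <= M.
Proof. by move=> hx; have := w_leM hx; rewrite (wrE hx) lee_fin. Qed.

Lemma halphaE x : edom h x -> H x = (hr x + alpha * wr x)%:E.
Proof. by move=> hx; rewrite /halpha (hrE hx) (wrE hx) EFinD EFinM. Qed.

Lemma halpha_notin_edom x : ~ edom h x -> H x = +oo%E.
Proof.
move=> /h_notin_edom hx; rewrite /halpha hx addye //.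
have : (0 <= alpha%:E * w x)%E by rewrite mule_ge0 // lee_fin ltW.
by case: (_ * _)%E.
Qed.

Lemma edom_convex x y t : 0 <= t <= 1 -> edom h x -> edom h y ->
  edom h (t *: x + (1 - t) *: y).
Proof.
move=> t01 hx hy; rewrite /edom /=; apply: le_lt_trans (convh x y t01) _.
by rewrite (hrE hx) (hrE hy) -!EFinM -EFinD ltry.
Qed.

Lemma hr_convex x y t : 0 <= t <= 1 -> edom h x -> edom h y ->
  hr (t *: x + (1 - t) *: y) <= t * hr x + (1 - t) * hr y.
Proof.
move=> t01 hx hy; have := convh x y t01.
by rewrite (hrE hx) (hrE hy) (hrE (edom_convex t01 hx hy)) -!EFinM -EFinD lee_fin.
Qed.

Lemma wr_strongly_convex x y t : 0 <= t <= 1 -> edom h x -> edom h y ->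
  wr (t *: x + (1 - t) *: y) + t * (1 - t) / 2 * N (x - y) ^+ 2 <=
  t * wr x + (1 - t) * wr y.
Proof.
move=> t01 hx hy; have := strongw hx hy t01.
by rewrite (wrE hx) (wrE hy) (wrE (edom_convex t01 hx hy)) -!EFinM -!EFinD lee_fin.
Qed.

Lemma argmin_lin_edom s x y : is_argmin_lin h w alpha s x -> edom h y -> edom h x.
Proof.
move=> xmin hy; apply: contrapT => hx; have := xmin y.
by rewrite (halpha_notin_edom hx) (halphaE hy) -EFinD /= leye_eq.
Qed.

Lemma argmin_lin_growth s x z : is_argmin_lin h w alpha s x -> edom h x -> edom h z ->
  dotp s x + (hr x + alpha * wr x) + alpha / 2 * N (z - x) ^+ 2 <=
  dotp s z + (hr z + alpha * wr z).
Proof.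
move=> xmin hx hz.
set Gx := dotp s x + _; set Gz := dotp s z + _; set Q := alpha / 2 * _.
apply: (ler_add_vanishing (c := Q)); last by rewrite mulr_ge0 ?sqr_ge0 ?divr_ge0 ?ltW.
move=> t t0 t1; have t01 : 0 <= t <= 1 by rewrite !ltW.
have := xmin (t *: z + (1 - t) *: x).
rewrite (halphaE hx) (halphaE (edom_convex t01 hz hx)) -!EFinD lee_fin dotpDr !dotpZr.
have := ler_wpM2l (ltW alpha0) (wr_strongly_convex t01 hz hx).
have := hr_convex t01 hz hx.
move=> hconv wconv min_t.
suff : t * (Gx + Q - Gz - t * Q) <= 0 by rewrite pmulr_rle0 //; lra.
by rewrite /Gx /Gz /Q; lra.
Qed.

Lemma econj_halpha_ge s x : edom h x ->
  ((- dotp s x - (hr x + alpha * wr x))%:E <= econj H (- s))%E.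
Proof.
by move=> hx; apply: ereal_sup_ubound; exists x; rewrite ?(halphaE hx) ?dotpNl ?EFinB.
Qed.

(* Growth bound plus  eta <e, z - x> - alpha/2 N(z - x)^2 <= eta^2 ||e||_*^2 / (2 alpha). *)
Lemma econj_halpha_step s x e eta : is_argmin_lin h w alpha s x -> edom h x -> 0 <= eta ->
  (econj H (- ((1 - eta) *: s + eta *: e)) <=
   (- (dotp s x + (hr x + alpha * wr x)) - eta * dotp (e - s) x
     + eta ^+ 2 * dual_norm N (s - e) ^+ 2 / (2 * alpha))%:E)%E.
Proof.
move=> xmin hx eta0; apply: ge_ereal_sup => _ [z _ <-].
have [hz|hz] := pselect (edom h z); last first.
  by rewrite (halpha_notin_edom hz) /= addeNy leNye.
rewrite (halphaE hz) -EFinB lee_fin.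
have grow := argmin_lin_growth xmin hx hz.
have dual := ler_dotp_dual normN (s - e) (z - x).
have E0 : 0 <= dual_norm N (s - e) by apply: dual_norm_ge0.
set E := dual_norm N (s - e) in dual E0 *; set D := N (z - x) in dual grow.
have amgm : eta * D * E - alpha / 2 * D ^+ 2 <= eta ^+ 2 * E ^+ 2 / (2 * alpha).
  rewrite -subr_ge0.
  have -> : eta ^+ 2 * E ^+ 2 / (2 * alpha) - (eta * D * E - alpha / 2 * D ^+ 2) =
      (eta * E - alpha * D) ^+ 2 / (2 * alpha) by field; rewrite gt_eqF.
  by rewrite divr_ge0 ?sqr_ge0 // mulr_ge0 // ltW.
have := ler_wpM2l eta0 dual.
rewrite ?dotpBl ?dotpBr ?dotpNl ?dotpDl ?dotpZl ?dotpBl; lra.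
Qed.

Variables (f : V -> R) (g : V -> V) (L : R).
Hypothesis gradf : is_gradient f g.
Hypothesis convf : convex_fun f.
Hypothesis smoothf : smooth_wrt N g L.
Hypothesis L0 : 0 < L.

Let phir x := f x + (hr x + alpha * wr x).

Lemma phialphaE x : edom h x -> phialpha f h w alpha x = (phir x)%:E.
Proof. by move=> hx; rewrite /phialpha (halphaE hx) EFinD. Qed.

Lemma gap_ge_phialpha_sub y s z : edom h y -> edom h z ->
  ((phir y - phir z)%:E <= gap f h w alpha y s)%E.
Proof.
move=> hy hz; rewrite /gap /psialpha (phialphaE hy).
apply: le_trans (leeD (lexx _) (leeD (econj_halpha_ge s hz) (rconj_ge f s z))).
by rewrite -!EFinD lee_fin /phir; lra.
Qed.

Lemma gap_ge0 y s : edom h y -> (0 <= gap f h w alpha y s)%E.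
Proof. by move=> hy; have := gap_ge_phialpha_sub s hy hy; rewrite subrr. Qed.

Lemma phi_le_phi_star_gap y s e : edom h y -> (gap f h w alpha y s <= e%:E)%E ->
  (phi f h y <= phi_star f h + (e + alpha * M)%:E)%E.
Proof.
move=> hy gap_e; rewrite /phi (hrE hy) -EFinD -leeBlDr // -EFinB.
apply: le_ereal_inf_tmp => _ [z _ <-].
have [hz|hz] := pselect (edom h z); last by rewrite /phi (h_notin_edom hz) addey ?leey.
rewrite /phi (hrE hz) -EFinD lee_fin.
have := le_trans (gap_ge_phialpha_sub s hy hz) gap_e; rewrite lee_fin /phir.
have := ler_wpM2l (ltW alpha0) (wr_leM hz).
have := mulr_ge0 (ltW alpha0) (wr_ge0 hy).
lra.
Qed.

Let eta := alpha / (L + alpha).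

Let eta01 : 0 <= eta <= 1.
Proof. exact: divDr_itv. Qed.

(* The step size that makes the quadratic terms of the three estimates below cancel. *)
Let eta_balance : L * eta = alpha * (1 - eta).
Proof. by rewrite /eta; field; rewrite gt_eqF ?addr_gt0. Qed.

Let eta1 : 0 <= 1 - eta <= 1.
Proof. by have /andP[? ?] := eta01; apply/andP; split; lra. Qed.

Let stepE (x y : V) : (1 - eta) *: y + eta *: x = (1 - eta) *: y + (1 - (1 - eta)) *: x.
Proof. by rewrite subKr. Qed.

Lemma edom_step x y : edom h x -> edom h y -> edom h ((1 - eta) *: y + eta *: x).
Proof. by move=> hx hy; rewrite stepE; apply: edom_convex. Qed.

Lemma halpha_step x y : edom h x -> edom h y ->
  hr ((1 - eta) *: y + eta *: x) + alpha * wr ((1 - eta) *: y + eta *: x)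
    + alpha * ((1 - eta) * eta / 2 * N (y - x) ^+ 2) <=
  (1 - eta) * (hr y + alpha * wr y) + eta * (hr x + alpha * wr x).
Proof.
move=> hx hy; have := hr_convex eta1 hy hx.
have := ler_wpM2l (ltW alpha0) (wr_strongly_convex eta1 hy hx).
by rewrite -!stepE subKr; lra.
Qed.

Lemma gap_step_le s x y A B :
  is_argmin_lin h w alpha s x -> edom h x -> edom h y ->
  (econj H (- s) <= A%:E)%E -> (rconj f s <= B%:E)%E ->
  (gap f h w alpha ((1 - eta) *: y + eta *: x) ((1 - eta) *: s + eta *: g y)
     <= ((1 - eta) * (phir y + A + B))%:E)%E.
Proof.
move=> xmin hx hy sA sB; have /andP[eta0 _] := eta01; have /andP[eta1' _] := eta1.
set y' := (1 - eta) *: y + eta *: x.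
have desc := descent_lemma normN gradf smoothf y y'.
have yy' : y' - y = eta *: (x - y) by apply/rowP => i; rewrite !mxE; ring.
rewrite yy' dotpZr (nrmZ normN) ger0_norm // (nrm_distC normN) dotpBr in desc.
have hstep := halpha_step hx hy.
have econj_s' := econj_halpha_step (g y) xmin hx eta0.
have rconj_s' := rconj_step normN gradf convf smoothf L0 y eta01 sB.
have xA := le_trans (econj_halpha_ge s hx) sA; rewrite lee_fin in xA.
rewrite /gap /psialpha (phialphaE (edom_step hx hy)).
apply: le_trans (leeD (lexx _) (leeD econj_s' rconj_s')) _.
rewrite -!EFinD lee_fin /phir dotpBl.
set D2 := N (y - x) ^+ 2 in hstep; set E2 := dual_norm N (s - g y) ^+ 2.
have cancelD : L / 2 * (eta * N (y - x)) ^+ 2 = alpha * ((1 - eta) * eta / 2 * D2).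
  have -> : L / 2 * (eta * N (y - x)) ^+ 2 = L * eta * (eta / 2 * D2) by rewrite /D2; ring.
  by rewrite eta_balance; ring.
have cancelE : eta ^+ 2 * E2 / (2 * alpha) = eta * (1 - eta) * (E2 / (2 * L)).
  have -> : eta ^+ 2 * E2 / (2 * alpha) = eta * E2 / (2 * alpha * L) * (L * eta).
    by field; rewrite !gt_eqF.
  by rewrite eta_balance; field; rewrite !gt_eqF.
have := ler_wpM2l eta1' xA; lra.
Qed.

Lemma gap_step s x y Phi :
  is_argmin_lin h w alpha s x -> edom h x -> edom h y ->
  (gap f h w alpha y s <= Phi%:E)%E ->
  (gap f h w alpha ((1 - eta) *: y + eta *: x) ((1 - eta) *: s + eta *: g y)
     <= ((1 - eta) * Phi)%:E)%E.
Proof.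
move=> xmin hx hy; rewrite /gap /psialpha (phialphaE hy) -leeBrDl // -EFinB.
have econj_gtNy : (-oo < econj H (- s))%E.
  by apply: lt_le_trans (econj_halpha_ge s hy); apply: ltNyr.
have rconj_gtNy : (-oo < rconj f s)%E.
  by apply: lt_le_trans (rconj_ge f s y); apply: ltNyr.
move=> /(leeD_fin_split econj_gtNy rconj_gtNy) [A [B [sA sB AB]]].
apply: le_trans (gap_step_le xmin hx hy sA sB) _.
by have /andP[eta1' _] := eta1; rewrite lee_fin ler_wpM2l //; lra.
Qed.

Variables (x y s : nat -> V) (D : R).
Hypothesis iterates : AggGCG g h w alpha eta x y s.
Hypothesis y0_dom : edom h (y 0%N).
Hypothesis gap0 : (gap f h w alpha (y 0%N) (s 0%N) <= D%:E)%E.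

Lemma AggGCG_gap_le k :
  edom h (y k) /\ (gap f h w alpha (y k) (s k) <= ((1 - eta) ^+ k * D)%:E)%E.
Proof.
elim: k => [|k [yk gapk]]; first by rewrite expr0 mul1r.
have [xmin -> ->] := iterates k.
have xk := argmin_lin_edom xmin y0_dom.
split; first exact: edom_step.
by rewrite exprSr mulrAC mulrC gap_step.
Qed.

End AggGCGAnalysis.

Lemma geometric_decay_le_half (R : realType) (q D e : R) (k : nat) :
  0 <= q <= 1 -> 0 <= D -> 0 < e -> 1 + ln (1 + D / e) <= q * k%:R ->
  (1 - q) ^+ k * D <= e / 2.
Proof.
move=> /andP[q0 q1] D0 e0 qk.
have De : 0 < 1 + D / e by have := divr_ge0 D0 (ltW e0); lra.
have decay : (1 - q) ^+ k <= (expR 1 * (1 + D / e))^-1.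
  have -> : (expR 1 * (1 + D / e))^-1 = expR (- (1 + ln (1 + D / e))).
    by rewrite expRN expRD lnK.
  apply: (@le_trans _ _ (expR (- q) ^+ k)).
    rewrite lerXn2r ?nnegrE ?subr_ge0 ?expR_ge0 //.
    by have := expR_ge1Dx (- q); lra.
  by rewrite -expRM_natl ler_expR mulrC mulNr lerN2.
have e1 : 2 <= expR (1 : R) by have := expR_ge1Dx (1 : R); lra.
apply: le_trans (ler_wpM2r D0 decay) _.
rewrite mulrC ler_pdivrMr ?mulr_gt0 ?expR_gt0 //.
have -> : e / 2 * (expR 1 * (1 + D / e)) = expR 1 / 2 * (e + D).
  by field; rewrite gt_eqF.
have : 1 <= expR (1 : R) / 2 by rewrite ler_pdivlMr //; lra.
nra.
Qed.

Lemma contraction_iteration_count (R : realType) (L alpha e D : R) :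
  0 < L -> 0 < alpha -> 0 < e -> 0 <= D ->
  exists k : nat, k%:R <= (1 + L / alpha) * (1 + ln (1 + D / e)) + 1 /\
    (1 - alpha / (L + alpha)) ^+ k * D <= e / 2.
Proof.
move=> L0 alpha0 e0 D0.
have lnD : 0 <= ln (1 + D / e) by rewrite ln_ge0 // lerDl divr_ge0 // ltW.
set X := (1 + L / alpha) * (1 + ln (1 + D / e)).
have X0 : 0 <= X by rewrite mulr_ge0 // addr_ge0 // divr_ge0 // ltW.
exists (Num.truncn X).+1; split; first by rewrite -addn1 natrD lerD2r truncn_le.
have /andP[eta0 eta1] := divDr_itv L0 alpha0.
apply: geometric_decay_le_half => //; first by rewrite eta0.
have -> : 1 + ln (1 + D / e) = alpha / (L + alpha) * X.
  by rewrite /X mulrA; field; rewrite !gt_eqF ?addr_gt0.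
exact/(ler_wpM2l eta0)/ltW/truncnS_gt.
Qed.

Theorem theorem4p2 :
  exists C p : nat,
  forall (R : realType) (n : nat) (N : 'rV[R]_n -> R)
    (f : 'rV[R]_n -> R) (gradf : 'rV[R]_n -> 'rV[R]_n) (L : R)
    (h w : 'rV[R]_n -> \bar R) (M eps : R)
    (x y s : nat -> 'rV[R]_n) (D : R),
  is_norm N ->
  convex_fun f -> is_gradient f gradf -> 0 < L -> smooth_wrt N gradf L ->
  eclosed h -> eproper h -> econvex h -> bounded_dom N h ->
  (forall x0, (0 <= w x0)%E) -> eclosed w -> strongly_convex_on N (edom h) w ->
  (forall x0, edom h x0 -> (w x0 <= M%:E)%E) ->
  (exists2 x0, edom h x0 & w x0 = M%:E) ->
  0 < M ->
  0 < eps ->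
  let alpha := eps / (2 * M) in
  let eta := alpha / (L + alpha) in
  edom h (y 0%N) ->
  AggGCG gradf h w alpha eta x y s ->
  (gap f h w alpha (y 0%N) (s 0%N) <= D%:E)%E ->
  exists k : nat,
    [/\ (k%:R <= C%:R * (1 + M * L / eps) * (1 + ln (1 + D / eps)) ^+ p),
        (gap f h w alpha (y k) (s k) <= (eps / 2)%:E)%E
      & (phi f h (y k) <= phi_star f h + eps%:E)%E].
Proof.
exists 3%N, 1%N.
move=> R n N f gradf L h w M eps x y s D normN convf gradfE L0 smoothf _ properh convh _.
move=> w_ge0 _ strongw w_leM _ M0 eps0 alpha eta y0 iterates gap0.
have alpha0 : 0 < alpha by rewrite divr_gt0 ?mulr_gt0.
have alphaM : alpha * M = eps / 2 by rewrite /alpha; field; rewrite gt_eqF.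
have D0 : 0 <= D.
  by rewrite -lee_fin (le_trans (gap_ge0 alpha properh w_ge0 w_leM f (s 0%N) y0) gap0).
have [k [k_le decay]] := contraction_iteration_count L0 alpha0 eps0 D0.
have [yk gapk] := AggGCG_gap_le normN properh convh w_ge0 strongw w_leM alpha0
  gradfE convf smoothf L0 iterates y0 gap0 k.
have gap_half : (gap f h w alpha (y k) (s k) <= (eps / 2)%:E)%E.
  by apply: le_trans gapk _; rewrite lee_fin.
exists k; split => //.
  have La : L / alpha = 2 * (M * L / eps) by rewrite /alpha; field; rewrite !gt_eqF.
  have lnD : 0 <= ln (1 + D / eps) by rewrite ln_ge0 // lerDl divr_ge0 // ltW.
  have MLe : 0 <= M * L / eps by rewrite divr_ge0 ?mulr_ge0 // ltW.
  rewrite expr1 La in k_le *; nra.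
by have := phi_le_phi_star_gap properh w_ge0 w_leM alpha0 yk gap_half; rewrite alphaM -splitr.
Qed.
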